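(* Fix $d\in\mathbb N$ and $k\le d$, and let $S_\star\subseteq[d]$ with $|S_\star|=k$ be unknown. Suppose samples $\{(x^{(i)},\tilde z^{(i)})\}_{i=1}^m$ are generated under propagating noise with level $\eta\in[0,1/2)$, where the orderings $\pi^{(1)},\dots,\pi^{(m)}$ may be chosen adversarially based on $(x^{(1)},\dots,x^{(m)})$. Then there is a universal constant $C>0$ such that for every $\delta\in(0,1)$, if $m\ge C\cdot\frac{k}{(1-2\eta)^2}\log\frac d\delta$, the output $\hat S$ of the Support Recovery Algorithm satisfies $\Pr[\hat S=S_\star]\ge1-\delta$.
   Context: Data model: $x^{(1)},\dots,x^{(m)}$ are i.i.d. uniform on $\{0,1\}^d$. For each $i$, a bijection $\pi^{(i)}:[k]\to S_\star$ (an ordering of $S_\star$) is chosen (possibly adversarially as a function of all the inputs). With $\xi^{(i)}_1,\dots,\xi^{(i)}_k$ i.i.d. $\mathrm{Bern}(\eta)$, independent of everything else, the observed chain is $\tilde z^{(i)}=(\tilde z^{(i)}_1,\dots,\tilde z^{(i)}_k)$ with $\tilde z^{(i)}_0=0$ and $\tilde z^{(i)}_t=\tilde z^{(i)}_{t-1}\oplus x^{(i)}_{\pi^{(i)}(t)}\oplus\xi^{(i)}_t$ for $t=1,\dots,k$ (equivalently $\tilde z^{(i)}_t=\bigoplus_{s\le t}x^{(i)}_{\pi^{(i)}(s)}\oplus\bigoplus_{s\le t}\xi^{(i)}_s$). Support Recovery Algorithm: with $\tilde z^{(i)}_0=0$, set $\tilde\delta^{(i)}_t=1-2(\tilde z^{(i)}_t\oplus\tilde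 z^{(i)}_{t-1})$ and $\tilde s^{(i)}=\sum_{t=1}^k\tilde\delta^{(i)}_t$; for each $j\in[d]$ compute $\mathrm{score}(j)=\frac1m\sum_{i=1}^m(1-2x^{(i)}_j)\tilde s^{(i)}$; output $\hat S$ as the $k$ indices with largest score. *)

From HB Require Import structures.
From mathcomp Require Import all_boot all_order all_algebra.
From mathcomp Require Import reals exp Rstruct.
Set Implicit Arguments. Unset Strict Implicit. Unset Printing Implicit Defensive.
Import Order.TTheory GRing.Theory Num.Theory.
Local Open Scope ring_scope.

Notation RR := Rdefinitions.R.

Definition inputs (m d : nat) := {ffun 'I_m -> {ffun 'I_d -> bool}}.
(* noise bits xi i t = xi^{(i)}_{t+1} *)
Definition noises (m k : nat) := {ffun 'I_m -> {ffun 'I_k -> bool}}.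

(* Adversarial orderings: for every input vector x and sample i,
   ord x i : 'I_k -> 'I_d (ord x i t = pi^{(i)}(t+1)). *)
Definition orderings (m d k : nat) := inputs m d -> 'I_m -> 'I_k -> 'I_d.

Definition valid_orderings (m d k : nat) (Sstar : {set 'I_d})
  (pi : orderings m d k) : Prop :=
  forall (x : inputs m d) (i : 'I_m),
    injective (pi x i) /\ (forall t, pi x i t \in Sstar) /\
    (forall j, j \in Sstar -> exists t, pi x i t = j).

(* observed chain: ztilde n = z~^{(i)}_n for n = 0..k,
   z~_n = XOR_{s <= n} (x_{pi(s)} xor xi_s), z~_0 = 0 *)
Definition ztilde (m d k : nat) (pi : orderings m d k) (x : inputs m d)
  (xi : noises m k) (i : 'I_m) (n : nat) : bool :=
  \big[addb/false]_(s < k | (s < n)%N) (x i (pi x i s) (+) xi i s).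

(* delta~_t = 1 - 2 (z~_t xor z~_{t-1}), for t = 1..k (here t : 'I_k means t+1) *)
Definition deltat (m d k : nat) (pi : orderings m d k) (x : inputs m d)
  (xi : noises m k) (i : 'I_m) (t : 'I_k) : RR :=
  1 - 2 * ((ztilde pi x xi i t.+1 (+) ztilde pi x xi i t : bool) : nat)%:R.

Definition stilde (m d k : nat) (pi : orderings m d k) (x : inputs m d)
  (xi : noises m k) (i : 'I_m) : RR :=
  \sum_(t < k) deltat pi x xi i t.

Definition score (m d k : nat) (pi : orderings m d k) (x : inputs m d)
  (xi : noises m k) (j : 'I_d) : RR :=
  (m%:R)^-1 * \sum_(i < m) (1 - 2 * ((x i j : nat)%:R)) * stilde pi x xi i.

(* "S_hat = S_star": every admissible output of the algorithm (any set of
   k indices with the largest scores, under any tie-breaking) equals S_star. *)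
Definition recovers (m d k : nat) (Sstar : {set 'I_d}) (pi : orderings m d k)
  (x : inputs m d) (xi : noises m k) : bool :=
  [forall T : {set 'I_d},
     ((#|T| == k) &&
      [forall j in T, forall j' in ~: T, score pi x xi j' <= score pi x xi j])
     ==> (T == Sstar)].

Definition bern (eta : RR) (b : bool) : RR := if b then eta else 1 - eta.

Definition weight (m d k : nat) (eta : RR) (x : inputs m d) (xi : noises m k) : RR :=
  (\prod_(i < m) \prod_(j < d) (2%:R)^-1) *
  (\prod_(i < m) \prod_(t < k) bern eta (xi i t)).

Definition success_prob (m d k : nat) (eta : RR) (Sstar : {set 'I_d})
  (pi : orderings m d k) : RR :=
  \sum_(x : inputs m d) \sum_(xi : noises m k)
     (if recovers Sstar pi x xi then weight eta x xi else 0).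

From HB Require Import structures.
From mathcomp Require Import all_boot all_order all_algebra.
From mathcomp Require Import reals exp Rstruct sequences.
From mathcomp Require Import lra ring.
Import Order.TTheory GRing.Theory Num.Theory.
Local Open Scope ring_scope.
Set Implicit Arguments. Unset Strict Implicit. Unset Printing Implicit Defensive.

(* Write sigma(b) = (-1)^b.  Consecutive observations differ by x_(pi t) xor xi_t,
   so s~ = sum_t sigma(x_(pi t)) sigma(xi_t): the adversarial ordering only decides
   which noise bit multiplies which coordinate of S*, and since the noise bits are
   i.i.d. and independent of x, it has no effect on the law of the statistic.  Fix a
   coordinate j.  The moment generating function of sum_i sigma(x_ij) s~_i factorises
   over the samples, and inside one sample the change of variables x_a -> x_a xor x_j
   (a in S*, a <> j) turns the products sigma(x_j) sigma(x_a) into independent uniform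
   signs, so that it is at most exp(m ((1 - 2 eta) mu [j in S*] + 2 k mu^2)).
   A Chernoff bound with mu = -/+ (1 - 2 eta)/(8k) and threshold m (1 - 2 eta)/2
   shows that j falls on the wrong side of the threshold with probability at most
   exp(-m (1 - 2 eta)^2 / (32 k)); a union bound over the d coordinates finishes. *)

Lemma bit_signE (R : pzRingType) (b : bool) : 1 - 2 * (b : nat)%:R = (-1) ^+ b :> R.
Proof.
by case: b; rewrite /= ?mulr1 ?mulr0 ?subr0 // mulr2n opprD addrA subrr add0r.
Qed.

Lemma sum_ffun2_prod (R : comPzSemiRingType) (I J T : finType) (F : I -> J -> T -> R) :
  \sum_(f : {ffun I -> {ffun J -> T}}) \prod_i \prod_j F i j (f i j)
  = \prod_i \prod_j \sum_(b : T) F i j b.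
Proof.
transitivity (\prod_i \sum_(v : {ffun J -> T}) \prod_j F i j (v j)).
  by rewrite bigA_distr_bigA.
by apply: eq_bigr => i _; rewrite bigA_distr_bigA.
Qed.

Lemma big_inj_onto (R : Type) (idx : R) (op : Monoid.com_law idx) (I J : finType)
    (S : {set J}) (f : I -> J) (G : J -> R) :
  injective f -> (forall t, f t \in S) -> (forall a, a \in S -> exists t, f t = a) ->
  \big[op/idx]_t G (f t) = \big[op/idx]_(a in S) G a.
Proof.
move=> f_inj f_in f_onto.
have -> : S = f @: setT.
  apply/setP => a; apply/idP/imsetP => [/f_onto[t <-]|[t _ ->] //].
  by exists t; rewrite ?in_setT.
rewrite big_imset /=; last by move=> ? ? _ _; apply: f_inj.
by apply: eq_bigl => t; rewrite in_setT.
Qed.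

Lemma expR_le_quad (R : realType) (x : R) : x <= 2^-1 -> expR x <= 1 + x + 2 * x ^+ 2.
Proof.
move=> x_le.
set q := 1 + x + 2 * x ^+ 2.
have q_ge0 : 0 <= q by rewrite /q; nra.
(* 1 <= (1 - x) q <= expR (- x) q, since (1 - x) q = 1 + x^2 (1 - 2x). *)
have one_le : 1 <= expR (- x) * q.
  have : 0 <= x ^+ 2 * (1 - 2 * x) by apply: mulr_ge0; [exact: sqr_ge0 | lra].
  have : 1 - x <= expR (- x) by have := expR_ge1Dx (- x); lra.
  rewrite /q; nra.
have := ler_wpM2l (ltW (expR_gt0 x)) one_le.
by rewrite mulr1 mulrA expRxMexpNx_1 mul1r.
Qed.

Lemma union_expR_bound (n : nat) (b : bool) (F : 'I_n -> RR) :
  (~~ b -> exists j, 0 <= F j) -> 1 - \sum_j expR (F j) <= b%:R.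
Proof.
have sum_ge0 (P : pred 'I_n) : 0 <= \sum_(j | P j) expR (F j).
  by apply: sumr_ge0 => j _; exact: expR_ge0.
case: b => [_|/(_ isT) [j Fj_ge0]]; first by have := sum_ge0 predT; rewrite /=; lra.
rewrite (bigD1 j) //=; have := expR_ge1Dx (F j); have := sum_ge0 (predC1 j); lra.
Qed.

Lemma sum_bern (eta : RR) : \sum_(b : bool) bern eta b = 1.
Proof. by rewrite big_bool /=; lra. Qed.

Lemma bern_ge0 (eta : RR) (b : bool) : 0 <= eta -> eta <= 1 -> 0 <= bern eta b.
Proof. by case: b => /=; lra. Qed.

Definition bern_mgf (eta s : RR) : RR := \sum_(b : bool) bern eta b * expR (s * (-1) ^+ b).

Lemma bern_mgfE (eta s : RR) : bern_mgf eta s = eta * expR (- s) + (1 - eta) * expR s.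
Proof. by rewrite /bern_mgf big_bool /= expr1 expr0 mulrN1 mulr1. Qed.

Lemma bern_mgf_ge0 (eta s : RR) : 0 <= eta -> eta <= 1 -> 0 <= bern_mgf eta s.
Proof.
by move=> ? ?; apply: sumr_ge0 => b _; rewrite mulr_ge0 ?bern_ge0 ?expR_ge0.
Qed.

Lemma bern_mgf_le (eta s : RR) : 0 <= eta -> eta <= 1 -> `|s| <= 2^-1 ->
  bern_mgf eta s <= expR ((1 - 2 * eta) * s + 2 * s ^+ 2).
Proof.
move=> eta_ge0 eta_le1 /ler_normlP[sN_le s_le].
have := expR_le_quad s_le; have := expR_le_quad sN_le; rewrite sqrrN => eN eP.
rewrite bern_mgfE; apply: le_trans (expR_ge1Dx _).
have : eta * expR (- s) <= eta * (1 - s + 2 * s ^+ 2) by apply: ler_wpM2l.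
have : (1 - eta) * expR s <= (1 - eta) * (1 + s + 2 * s ^+ 2) by apply: ler_wpM2l; lra.
nra.
Qed.

Lemma bern_mgf_sym_le (eta s : RR) : `|s| <= 2^-1 ->
  2^-1 * (bern_mgf eta s + bern_mgf eta (- s)) <= expR (2 * s ^+ 2).
Proof.
move=> /ler_normlP[sN_le s_le].
have := expR_le_quad s_le; have := expR_le_quad sN_le; rewrite sqrrN => eN eP.
have -> : bern_mgf eta s + bern_mgf eta (- s) = expR s + expR (- s).
  by rewrite !bern_mgfE opprK; ring.
apply: le_trans (expR_ge1Dx _); lra.
Qed.

Section SignFlip.
Variables (d : nat) (S : {set 'I_d}) (j : 'I_d).

Definition sign_flip (y : {ffun 'I_d -> bool}) : {ffun 'I_d -> bool} :=
  [ffun a => if (a \in S) && (a != j) then y a (+) y j else y a].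

Lemma sign_flip_j (y : {ffun 'I_d -> bool}) : sign_flip y j = y j.
Proof. by rewrite ffunE eqxx andbF. Qed.

Lemma sign_flipK : involutive sign_flip.
Proof.
move=> y; apply/ffunP => a; rewrite {1}/sign_flip ffunE sign_flip_j ffunE.
by case: ifP => cond; rewrite cond ?addbK.
Qed.

Lemma sum_sign_prod_flip (g : RR -> RR) :
  \sum_(y : {ffun 'I_d -> bool})
     (\prod_(a < d) 2^-1) * \prod_(a in S) g ((-1) ^+ y j * (-1) ^+ y a)
  = \prod_(a < d) (2^-1 * \sum_(b : bool)
       if a \in S then g (if a == j then 1 else (-1) ^+ b) else 1).
Proof.
rewrite (reindex_inj (can_inj sign_flipK)) /=.
under [RHS]eq_bigr do rewrite mulr_sumr.
rewrite bigA_distr_bigA; apply: eq_bigr => y _.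
rewrite big_split /= -big_mkcond; congr (_ * _).
apply: eq_bigr => a aS; rewrite sign_flip_j ffunE aS /=.
by case: eqP => [->|_]; case: (y j); case: (y a); rewrite /=; congr g; ring.
Qed.

Lemma sum_sign_prod_le (g : RR -> RR) (alpha beta : RR) :
  (forall c, 0 <= g c) -> g 1 <= expR (alpha + beta) ->
  2^-1 * (g 1 + g (-1)) <= expR beta ->
  \sum_(y : {ffun 'I_d -> bool})
     (\prod_(a < d) 2^-1) * \prod_(a in S) g ((-1) ^+ y j * (-1) ^+ y a)
  <= expR ((if j \in S then alpha else 0) + #|S|%:R * beta).
Proof.
move=> g_ge0 g1_le g_avg_le; rewrite sum_sign_prod_flip.
pose V a := (if a \in S then beta else 0) +
            (if a == j then if j \in S then alpha else 0 else 0).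
have -> : (if j \in S then alpha else 0) + #|S|%:R * beta = \sum_a V a.
  rewrite big_split /= addrC -big_mkcond big_pred1_eq -big_mkcond /=.
  by rewrite sumr_const mulr_natl.
rewrite expR_sum; apply: ler_prod => a _; rewrite big_bool /=.
have half (z : RR) : 2^-1 * (z + z) = z by lra.
apply/andP; split.
  by rewrite mulr_ge0 ?invr_ge0 ?ler0n ?addr_ge0 //; case: ifP.
rewrite /V; case: (boolP (a \in S)) => aS; last first.
  by case: eqP => [a_j|_] /=; rewrite -?a_j ?(negbTE aS) /= add0r exp.expR0 half.
case: eqP => [a_j|_] /=; first by rewrite -a_j aS half addrC.
by rewrite addr0 expr1 expr0 [g _ + _]addrC.
Qed.

End SignFlip.

Section Statistic.
Variables (m d k : nat) (pi : orderings m d k) (x : inputs m d) (xi : noises m k).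

Lemma ztildeS (i : 'I_m) (t : 'I_k) :
  ztilde pi x xi i t.+1 = ztilde pi x xi i t (+) (x i (pi x i t) (+) xi i t).
Proof.
rewrite /ztilde (bigD1 t) ?ltnSn //= addbC; congr (_ (+) _).
by apply: eq_bigl => s; rewrite ltnS ltn_neqAle andbC; congr (_ && _).
Qed.

Lemma deltatE (i : 'I_m) (t : 'I_k) :
  deltat pi x xi i t = (-1) ^+ x i (pi x i t) * (-1) ^+ xi i t.
Proof. by rewrite /deltat bit_signE ztildeS addbC addKb signr_addb. Qed.

Definition corr (j : 'I_d) : RR := \sum_(i < m) (-1) ^+ x i j * stilde pi x xi i.

Lemma scoreE (j : 'I_d) : score pi x xi j = m%:R^-1 * corr j.
Proof. by rewrite /score; under eq_bigr do rewrite bit_signE. Qed.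

Variable (S : {set 'I_d}).
Hypothesis cardS : #|S| = k.

Lemma recovers_of_gap (c : RR) : (0 < m)%N ->
  (forall j, if j \in S then c < corr j else corr j < c) -> recovers S pi x xi.
Proof.
move=> m_gt0 gap; apply/forallP => T; apply/implyP => /andP[/eqP cardT /forallP top].
rewrite eqEcard cardT cardS leqnn andbT; apply/subsetP => a aT; apply/contraT => aS.
have [b bS bT] : exists2 b, b \in S & b \notin T.
  apply/subsetPn; apply: contra aS => /(subset_cardP (etrans cardS (esym cardT))) eqST.
  by rewrite eqST.
have := top a; rewrite aT /= => /forallP/(_ b); rewrite in_setC bT /=.
rewrite !scoreE ler_pM2l ?invr_gt0 ?ltr0n //.
have := gap a; have := gap b; rewrite bS (negbTE aS) => lt_b lt_a.
by rewrite leNgt (lt_trans lt_a lt_b).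
Qed.

Lemma recovers_trivial : k = 0%N -> recovers S pi x xi.
Proof.
move=> k0; apply/forallP => T; apply/implyP => /andP[/eqP cardT _].
by rewrite (cards0_eq (etrans cardT k0)) (cards0_eq (etrans cardS k0)).
Qed.

End Statistic.

Section Expectation.
Variables (m d k : nat) (eta : RR).
Hypotheses (eta_ge0 : 0 <= eta) (eta_le1 : eta <= 1).

Definition expect (F : inputs m d -> noises m k -> RR) : RR :=
  \sum_(x : inputs m d) \sum_(xi : noises m k) weight eta x xi * F x xi.

Lemma weight_ge0 (x : inputs m d) (xi : noises m k) : 0 <= weight eta x xi.
Proof.
apply: mulr_ge0; apply: prodr_ge0 => i _; apply: prodr_ge0 => t _.
  by rewrite invr_ge0 ler0n.
exact: bern_ge0.
Qed.

Lemma sum_weight : \sum_(x : inputs m d) \sum_(xi : noises m k) weight eta x xi = 1.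
Proof.
under eq_bigr do rewrite -mulr_sumr.
rewrite -mulr_suml.
rewrite (sum_ffun2_prod (fun (i : 'I_m) (j : 'I_d) (b : bool) => (2 : RR)^-1)).
rewrite (sum_ffun2_prod (fun (i : 'I_m) (t : 'I_k) (b : bool) => bern eta b)).
rewrite big1 ?mul1r => [|i _]; last by rewrite big1 // => a _; rewrite big_bool /=; lra.
by rewrite big1 // => i _; rewrite big1 // => t _; exact: sum_bern.
Qed.

Lemma ler_expect (F G : inputs m d -> noises m k -> RR) :
  (forall x xi, F x xi <= G x xi) -> expect F <= expect G.
Proof.
by move=> FG; do 2!apply: ler_sum => ? _; rewrite ler_wpM2l ?weight_ge0.
Qed.

Lemma expect_one_sub_sum (n : nat) (F : 'I_n -> inputs m d -> noises m k -> RR) :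
  expect (fun x xi => 1 - \sum_j F j x xi) = 1 - \sum_j expect (F j).
Proof.
rewrite /expect.
under eq_bigr => x _ do under eq_bigr => xi _ do rewrite mulrBr mulr1 mulr_sumr.
under eq_bigr => x _ do rewrite sumrB exchange_big.
by rewrite sumrB sum_weight exchange_big.
Qed.

Lemma sum_noise_prod (x : inputs m d) (E : 'I_m -> 'I_k -> bool -> RR) :
  \sum_(xi : noises m k) weight eta x xi * \prod_i \prod_t E i t (xi i t) =
  (\prod_(i < m) \prod_(a < d) 2^-1) * \prod_i \prod_t \sum_(b : bool) bern eta b * E i t b.
Proof.
rewrite -sum_ffun2_prod mulr_sumr; apply: eq_bigr => xi _.
rewrite /weight -mulrA -big_split; congr (_ * _).
by apply: eq_bigr => i _; rewrite big_split.
Qed.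

Variables (S : {set 'I_d}) (pi : orderings m d k).

Lemma success_probE :
  success_prob eta S pi = expect (fun x xi => (recovers S pi x xi)%:R).
Proof.
by do 2!apply: eq_bigr => ? _; case: recovers; rewrite ?mulr1 ?mulr0.
Qed.

Lemma success_prob_trivial : #|S| = k -> k = 0%N -> success_prob eta S pi = 1.
Proof.
move=> cardS k0; rewrite -sum_weight; do 2!apply: eq_bigr => ? _.
by rewrite recovers_trivial.
Qed.

Lemma success_prob_union_bound (F : 'I_d -> inputs m d -> noises m k -> RR) :
  (forall x xi, ~~ recovers S pi x xi -> exists j, 0 <= F j x xi) ->
  1 - \sum_j expect (fun x xi => expR (F j x xi)) <= success_prob eta S pi.
Proof.
move=> witness; rewrite success_probE -expect_one_sub_sum.
by apply: ler_expect => x xi; apply: union_expR_bound; exact: witness.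
Qed.

End Expectation.

Section CorrMgf.
Variables (m d k : nat) (S : {set 'I_d}) (pi : orderings m d k) (eta : RR).
Hypotheses (piS : valid_orderings S pi) (eta_ge0 : 0 <= eta) (eta_le1 : eta <= 1).

Lemma expect_expR_corrE (j : 'I_d) (mu : RR) :
  expect eta (fun x xi => expR (mu * corr pi x xi j)) =
  \sum_(x : inputs m d) \prod_(i < m)
     ((\prod_(a < d) 2^-1) *
      \prod_(a in S) bern_mgf eta (mu * ((-1) ^+ x i j * (-1) ^+ x i a))).
Proof.
apply: eq_bigr => x _.
have expR_corr xi : expR (mu * corr pi x xi j) = \prod_(i < m) \prod_(t < k)
    expR (mu * ((-1) ^+ x i j * (-1) ^+ x i (pi x i t)) * (-1) ^+ xi i t).
  rewrite /corr mulr_sumr expR_sum; apply: eq_bigr => i _.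
  rewrite /stilde !mulr_sumr expR_sum; apply: eq_bigr => t _.
  by rewrite deltatE !mulrA.
under eq_bigr => xi _ do rewrite expR_corr.
rewrite (sum_noise_prod _ _ (fun i t b =>
  expR (mu * ((-1) ^+ x i j * (-1) ^+ x i (pi x i t)) * (-1) ^+ b))).
rewrite -big_split /=; apply: eq_bigr => i _; congr (_ * _).
have [pi_inj [pi_in pi_onto]] := piS x i.
exact: (big_inj_onto _ (fun a => bern_mgf eta (mu * ((-1) ^+ x i j * (-1) ^+ x i a)))
  pi_inj pi_in pi_onto).
Qed.

Lemma expect_expR_corr_le (j : 'I_d) (mu : RR) : `|mu| <= 2^-1 ->
  expect eta (fun x xi => expR (mu * corr pi x xi j)) <=
  expR (m%:R * ((if j \in S then (1 - 2 * eta) * mu else 0) + #|S|%:R * (2 * mu ^+ 2))).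
Proof.
move=> mu_small; rewrite expect_expR_corrE.
pose sample (y : {ffun 'I_d -> bool}) := (\prod_(a < d) (2 : RR)^-1) *
  \prod_(a in S) bern_mgf eta (mu * ((-1) ^+ y j * (-1) ^+ y a)).
rewrite -(bigA_distr_bigA (fun (_ : 'I_m) (y : {ffun 'I_d -> bool}) => sample y)).
rewrite expRM_natl -[in X in _ <= X](card_ord m) -prodr_const.
apply: ler_prod => i _; apply/andP; split.
  apply: sumr_ge0 => y _; apply: mulr_ge0; apply: prodr_ge0 => a _.
    by rewrite invr_ge0 ler0n.
  exact: bern_mgf_ge0.
apply: (sum_sign_prod_le S j (g := fun c => bern_mgf eta (mu * c))).
- by move=> c; exact: bern_mgf_ge0.
- by rewrite mulr1; exact: bern_mgf_le.
- by rewrite mulr1 mulrN1; exact: bern_mgf_sym_le.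
Qed.

Lemma expect_expR_corr_shift_le (j : 'I_d) (mu c : RR) : `|mu| <= 2^-1 ->
  expect eta (fun x xi => expR (mu * (corr pi x xi j - c))) <=
  expR (- (mu * c) +
        m%:R * ((if j \in S then (1 - 2 * eta) * mu else 0) + #|S|%:R * (2 * mu ^+ 2))).
Proof.
move=> mu_small; rewrite exp.expRD.
have -> : expect eta (fun x xi => expR (mu * (corr pi x xi j - c))) =
          expR (- (mu * c)) * expect eta (fun x xi => expR (mu * corr pi x xi j)).
  rewrite /expect mulr_sumr; apply: eq_bigr => x _; rewrite mulr_sumr.
  by apply: eq_bigr => xi _; rewrite mulrBr exp.expRD; ring.
by rewrite ler_wpM2l ?expR_ge0 // expect_expR_corr_le.
Qed.

End CorrMgf.

Lemma success_prob_ge (m d k : nat) (S : {set 'I_d}) (pi : orderings m d k) (eta : RR) :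
  valid_orderings S pi -> #|S| = k -> 0 <= eta -> eta < 2^-1 -> (0 < k)%N -> (0 < m)%N ->
  1 - d%:R * expR (- (m%:R * (1 - 2 * eta) ^+ 2 / (32 * k%:R))) <= success_prob eta S pi.
Proof.
move=> piS cardS eta_ge0 eta_lt_half k_gt0 m_gt0.
have eta_le1 : eta <= 1 by lra.
have b_gt0 : 0 < 1 - 2 * eta by lra.
set b := 1 - 2 * eta.
have k_ge1 : 1 <= k%:R :> RR by rewrite ler1n.
have k_neq0 : k%:R != 0 :> RR by rewrite pnatr_eq0 -lt0n.
set lam := b / (8 * k%:R); set c := m%:R * b / 2.
have lam_gt0 : 0 < lam by apply: divr_gt0 => //; lra.
have lam_small : lam <= 2^-1 by rewrite /lam ler_pdivrMr /b; lra.
pose mu j := if j \in S then - lam else lam.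
have tail j : expect eta (fun x xi => expR (mu j * (corr pi x xi j - c))) <=
              expR (- (m%:R * b ^+ 2 / (32 * k%:R))).
  have mu_small : `|mu j| <= 2^-1 by rewrite /mu; case: ifP; rewrite ?normrN gtr0_norm.
  apply: le_trans (expect_expR_corr_shift_le piS eta_ge0 eta_le1 j c mu_small) _.
  rewrite ler_expR cardS le_eqVlt; apply/predU1l.
  by rewrite -/b /mu /lam /c; case: ifP => _; field; exact: k_neq0.
have gap x xi : ~~ recovers S pi x xi -> exists j, 0 <= mu j * (corr pi x xi j - c).
  move=> fail; apply/existsP; apply: contraNT fail => /existsPn neg.
  apply: (recovers_of_gap cardS (c := c) m_gt0) => j.
  by have := neg j; rewrite -ltNge /mu; case: ifP => _; nra.
apply: le_trans (success_prob_union_bound eta_ge0 eta_le1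
  (F := fun j x xi => mu j * (corr pi x xi j - c)) gap); rewrite lerD2l lerN2.
apply: le_trans (ler_sum _ (fun j _ => tail j)) _.
by rewrite sumr_const card_ord (mulr_natl _ d).
Qed.

Lemma mul_expRN_le (D delta t : RR) : 0 < D -> 0 < delta -> ln (D / delta) <= t ->
  D * expR (- t) <= delta.
Proof.
move=> D_gt0 delta_gt0 le_t.
have : expR (- t) <= expR (- ln (D / delta)) by rewrite ler_expR lerN2.
rewrite expRN lnK ?posrE ?divr_gt0 // invf_div => le_e.
by rewrite mulrC -ler_pdivlMr.
Qed.

Theorem theorem11p1 :
  exists C : RR, 0 < C /\
  forall (d k : nat) (Sstar : {set 'I_d}) (eta delta : RR) (m : nat)
         (pi : orderings m d k),
    (k <= d)%N -> #|Sstar| = k ->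
    0 <= eta -> eta < 2%:R^-1 ->
    0 < delta -> delta < 1 ->
    valid_orderings Sstar pi ->
    C * k%:R / (1 - 2%:R * eta) ^+ 2 * ln (d%:R / delta) <= m%:R ->
    1 - delta <= success_prob eta Sstar pi.
Proof.
exists 32; split=> [|d k S eta delta m pi k_le_d cardS eta_ge0 eta_lt_half
                     delta_gt0 delta_lt1 piS m_large]; first lra.
have [k0|k_gt0] := posnP k; first by rewrite success_prob_trivial //; lra.
have d_ge1 : 1 <= d%:R :> RR by rewrite ler1n (leq_trans k_gt0).
have b2_gt0 : 0 < (1 - 2 * eta) ^+ 2 by rewrite exprn_gt0 //; lra.
have L_gt0 : 0 < ln (d%:R / delta).
  by rewrite ln_gt0 // ltr_pdivlMr // mul1r; lra.
have L_le : ln (d%:R / delta) <= m%:R * (1 - 2 * eta) ^+ 2 / (32 * k%:R).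
  rewrite ler_pdivlMr ?mulr_gt0 ?ltr0n //.
  by move: m_large; rewrite mulrAC ler_pdivrMr // mulrC.
have m_gt0 : (0 < m)%N.
  rewrite lt0n; apply/negP => /eqP m0; move: L_le; rewrite m0 mulr0n !mul0r; lra.
have := mul_expRN_le (lt_le_trans ltr01 d_ge1) delta_gt0 L_le.
have := success_prob_ge piS cardS eta_ge0 eta_lt_half k_gt0 m_gt0.
lra.
Qed.
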